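(* Let $\mathcal{A}$ be a central S-ring over a finite group $G$ with $n=|G|$. Then the sets $\mathrm{tr}(X)$, $X\in\mathcal{S}(\mathcal{A})$, form a partition of $G$, and $\mathrm{tr}(\mathcal{A})=\mathrm{Span}_{\mathbb{Z}}\{\underline{\mathrm{tr}(X)}: X\in\mathcal{S}(\mathcal{A})\}$ is a central S-ring over $G$ contained in $\mathcal{A}$; it consists exactly of the elements of $\mathcal{A}$ fixed by all the linear maps $\underline{X}\mapsto\underline{X^{(m)}}$ ($X\in\mathcal{S}(\mathcal{A})$), $m$ coprime to $n$.
   Context: For a finite group $G$ with identity $e$ and $X\subseteq G$, write $\underline{X}=\sum_{x\in X}x\in\mathbb{Z}G$. A subring $\mathcal{A}$ of $\mathbb{Z}G$ is an S-ring over $G$ if there is a partition $\mathcal{S}(\mathcal{A})$ of $G$ (basic sets) such that $\{e\}\in\mathcal{S}(\mathcal{A})$, $X\in\mathcal{S}(\mathcal{A})\Rightarrow X^{-1}\in\mathcal{S}(\mathcal{A})$, and $\mathcal{A}$ is the $\mathbb{Z}$-span of $\{\underline{X}: X\in\mathcal{S}(\mathcal{A})\}$. $\mathcal{A}$ is central if $\mathcal{A}\subseteq\mathcal{Z}(\mathbb{Z}G)$. For an integer $m$, $X^{(m)}=\{x^m:x\in X\}$. The trace of $X\subseteq G$ is $\mathrm{tr}(X)=\bigcup_{m:\ \gcd(m,|G|)=1}X^{(m)}$. *)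

From HB Require Import structures.
From mathcomp Require Import all_boot all_order all_algebra all_fingroup.
Set Implicit Arguments. Unset Strict Implicit. Unset Printing Implicit Defensive.
Import GRing.Theory.
Local Open Scope ring_scope.

(* The integral group ring ZG, modelled as finitely supported functions G -> Z:
   a = sum_g a(g) g  is represented by g |-> a(g). *)
Notation grpring gT := {ffun gT -> int}.

Definition gr_mul (gT : finGroupType) (a b : grpring gT) : grpring gT :=
  [ffun z => \sum_(x : gT) a x * b ((x^-1 * z)%g)].

Definition ul (gT : finGroupType) (X : {set gT}) : grpring gT :=
  [ffun x => ((x \in X) : nat)%:Z].

Definition in_span (gT : finGroupType) (S : {set {set gT}}) (a : grpring gT) : Prop :=
  exists c : {set gT} -> int, a = \sum_(X in S) ul X *~ c X.

Definition set_inv (gT : finGroupType) (X : {set gT}) : {set gT} :=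
  [set (x^-1)%g | x in X].

Definition set_pow (gT : finGroupType) (X : {set gT}) (m : nat) : {set gT} :=
  [set (x ^+ m)%g | x in X].

(* S is the set of basic sets of an S-ring over G:
   a partition of G containing {e}, closed under inversion, whose Z-span is a
   subring of ZG (closed under multiplication; it contains 1 = underline {e}
   and is closed under addition by construction). *)
Definition is_Sring (gT : finGroupType) (S : {set {set gT}}) : Prop :=
  [/\ partition S [set: gT],
      [set 1%g] \in S,
      (forall X, X \in S -> set_inv X \in S) &
      (forall a b, in_span S a -> in_span S b -> in_span S (gr_mul a b))].

Definition is_central (gT : finGroupType) (S : {set {set gT}}) : Prop :=
  forall a, in_span S a -> forall b : grpring gT, gr_mul a b = gr_mul b a.

(* tr(X) = union over m with gcd(m,|G|)=1 of X^(m); since x^|G| = 1, it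
   suffices to take the residues 0 <= m < |G|. *)
Definition trace (gT : finGroupType) (X : {set gT}) : {set gT} :=
  \bigcup_(m < #|[set: gT]| | coprime m #|[set: gT]|) set_pow X m.

Definition trace_sets (gT : finGroupType) (S : {set {set gT}}) : {set {set gT}} :=
  [set trace X | X in S].

(* The key tool is a Frobenius-type congruence: if a is a class function in ZG
   and p is a prime not dividing n = |G|, then a^p(y^p) = a(y) mod p.  It comes
   from expanding a^p(g) as a sum over the p-tuples of G with product g and
   letting the rotation of tuples, of order p, act: only the constant tuples
   survive mod p.  Applied to the basic sets of a central S-ring it gives Schur's
   theorem on multipliers: X^(m) is again a basic set for every m coprime to n.
   Hence tr(X) is the union of the basic sets X^(m), two traces are equal or
   disjoint, and the span of the traces is the set of elements of A that are
   invariant under x |-> x^m.  This span is closed under products: for primes q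
   beyond n and beyond twice a bound on the coefficients of ab, the congruence
   gives (ab)(x^q) = (ab)(x) mod q, hence equality, and every residue coprime
   to n is represented by a product of such primes. *)

From HB Require Import structures.
From mathcomp Require Import all_boot all_order all_algebra all_fingroup.
From mathcomp Require Import cyclic pgroup sylow finfield.
Set Implicit Arguments. Unset Strict Implicit. Unset Printing Implicit Defensive.
Import GRing.Theory Num.Theory Order.TTheory.
Local Open Scope ring_scope.

Section GroupRing.
Variable gT : finGroupType.

(* [{ffun gT -> int}] already has the pointwise ring structure; the alias
   carries the convolution product [gr_mul]. *)
Definition group_ring : Type := {ffun gT -> int}.
HB.instance Definition _ := GRing.Zmodule.on group_ring.

Implicit Types a b c : group_ring.

Lemma gr_mulE a b z : gr_mul a b z = \sum_(x : gT) a x * b (x^-1 * z)%g.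
Proof. by rewrite ffunE. Qed.

Lemma gr_mulA : associative (@gr_mul gT : group_ring -> _ -> _).
Proof.
move=> a b c; apply/ffunP => z; apply/esym; rewrite gr_mulE.
under eq_bigr => x _ do rewrite gr_mulE mulr_suml.
rewrite exchange_big /= gr_mulE; apply: eq_bigr => y _.
rewrite gr_mulE mulr_sumr (reindex_inj (mulgI y)) /=; apply: eq_bigr => u _.
by rewrite mulKg mulrA invMg mulgA.
Qed.

Lemma gr_mul1l : left_id (ul [set 1%g] : group_ring) (@gr_mul gT).
Proof.
move=> b; apply/ffunP => z; rewrite gr_mulE (bigD1 1%g) //= big1 ?addr0.
  by rewrite ffunE set11 invg1 mul1g mul1r.
by move=> x nx1; rewrite ffunE inE (negbTE nx1) mul0r.
Qed.

Lemma gr_mul1r : right_id (ul [set 1%g] : group_ring) (@gr_mul gT).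
Proof.
move=> b; apply/ffunP => z; rewrite gr_mulE (bigD1 z) //= big1 ?addr0.
  by rewrite ffunE mulVg set11 mulr1.
move=> x nxz; rewrite ffunE inE -(inj_eq (mulgI x)) mulKVg mulg1 eq_sym.
by rewrite (negbTE nxz) mulr0.
Qed.

Lemma gr_mulDl : left_distributive (@gr_mul gT : group_ring -> _ -> _) +%R.
Proof.
move=> a b c; apply/ffunP => z; rewrite gr_mulE [RHS]ffunE !gr_mulE -big_split.
by apply: eq_bigr => x _; rewrite ffunE mulrDl.
Qed.

Lemma gr_mulDr : right_distributive (@gr_mul gT : group_ring -> _ -> _) +%R.
Proof.
move=> a b c; apply/ffunP => z; rewrite gr_mulE [RHS]ffunE !gr_mulE -big_split.
by apply: eq_bigr => x _; rewrite ffunE mulrDr.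
Qed.

Lemma ul_set1_neq0 : (ul [set 1%g] : group_ring) != 0.
Proof. by apply/eqP => /ffunP/(_ 1%g); rewrite !ffunE set11. Qed.

HB.instance Definition _ := GRing.Zmodule_isNzRing.Build group_ring
  gr_mulA gr_mul1l gr_mul1r gr_mulDl gr_mulDr ul_set1_neq0.

Lemma group_ring_mulE a b z : (a * b) z = \sum_(x : gT) a x * b (x^-1 * z)%g.
Proof. exact: gr_mulE. Qed.

Lemma group_ring1E : (1 : group_ring) = ul [set 1%g].
Proof. by []. Qed.

End GroupRing.

Section PrimeOrderPerm.
Variables (T : finType) (p : nat) (f : {perm T}).
Hypotheses (p_pr : prime p) (fp1 : (f ^+ p = 1)%g).

Local Open Scope group_scope.
Lemma card_fixed_mod (A : {set T}) : (forall t, (f t \in A) = (t \in A)) ->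
  #|A| = #|[set t in A | f t == t]| %[mod p].
Proof.
move=> fA.
have pf : p.-group <[f]>.
  by rewrite /pgroup -orderE (pnat_dvd _ (pnat_id p_pr)) // order_dvdn fp1.
have actA : [acts <[f]>, on A | 'P].
  apply/actsP => g /cycleP[i ->] t; rewrite /= apermE permX.
  by elim: i => [|i IHi] //=; rewrite fA IHi.
rewrite (pgroup_fix_mod pf actA); congr (_ %% p)%N; apply: eq_card => t.
rewrite !inE; congr (_ && _); apply/subsetP/eqP => [fix_t | ft g /cycleP[i ->]].
  by have := fix_t f (cycle_id f); rewrite inE => /eqP.
by rewrite inE; apply/eqP/permX_fix.
Qed.

Local Close Scope group_scope.

Lemma sum_fixed_Fp (A : {set T}) (F : T -> 'F_p) :
  (forall t, (f t \in A) = (t \in A)) -> (forall t, F (f t) = F t) ->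
  \sum_(t in A) F t = \sum_(t in A | f t == t) F t.
Proof.
move=> fA fF.
rewrite (partition_big F (mem (F @: A))) => [|t tA]; last exact: imset_f.
rewrite [RHS](partition_big F (mem (F @: A))) => [|t /andP[tA _]]; last first.
  exact: imset_f.
apply: eq_bigr => v _; pose Av := [set t in A | F t == v].
transitivity (\sum_(t in Av) v).
  by apply: eq_big => [t | t /andP[_ /eqP->]] //; rewrite inE.
transitivity (\sum_(t in [set t in Av | f t == t]) v); last first.
  by apply/esym/eq_big => [t | t /andP[_ /eqP->]] //; rewrite !inE andbAC.
rewrite !sumr_const -[LHS]mulr_natr -[RHS]mulr_natr -Fp_nat_mod //.
by rewrite (card_fixed_mod (A := Av)) ?Fp_nat_mod // => t; rewrite !inE fA fF.
Qed.

End PrimeOrderPerm.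

Section TupleRotation.
Variables (T : finType) (k : nat).

Definition rot1_tuple (t : k.-tuple T) : k.-tuple T := [tuple of rot 1%N t].

Lemma rot1_tuple_inj : injective rot1_tuple.
Proof. by move=> t1 t2 /(congr1 val) /rot_inj /val_inj. Qed.

Definition rot_perm : {perm k.-tuple T} := perm rot1_tuple_inj.

Lemma rot_permE t : rot_perm t = rot1_tuple t.
Proof. by rewrite permE. Qed.

Lemma rot_perm_order : (rot_perm ^+ k = 1)%g.
Proof.
apply/permP => t; rewrite permX perm1; apply: val_inj.
suff iter_rot i : (i <= k)%N -> val (iter i rot_perm t) = rot i t.
  by rewrite iter_rot //; have := rot_size t; rewrite size_tuple.
elim: i => [|i IHi] lt_i_k /=; first by rewrite rot0.
by rewrite rot_permE /= IHi ?(ltnW lt_i_k) // [RHS]rotS ?size_tuple.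
Qed.

Lemma rot1_fixed_nseq (x0 : T) (s : seq T) :
  rot 1%N s = s -> s = nseq (size s) (nth x0 s 0).
Proof.
case: s => // x s; rewrite rot1_cons /= => eq_s; congr (_ :: _).
by elim: s eq_s => //= y s IHs [-> /IHs {1}->].
Qed.

End TupleRotation.

Section Words.
Variable gT : finGroupType.
Implicit Types a : group_ring gT.

Definition word_prod (s : seq gT) : gT := (\prod_(x <- s) x)%g.
Definition word_weight a (s : seq gT) : int := \prod_(x <- s) a x.

Lemma sum_tupleS k (F : k.+1.-tuple gT -> int) :
  \sum_(t : k.+1.-tuple gT) F t =
  \sum_(x : gT) \sum_(t : k.-tuple gT) F [tuple of x :: t].
Proof.
rewrite pair_big /= (reindex (fun p : gT * k.-tuple gT => [tuple of p.1 :: p.2])) //=.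
exists (fun t => (thead t, [tuple of behead t])) => [[x t] _ | t _].
  by rewrite /thead tnth0; congr pair; apply: val_inj.
by rewrite [RHS]tuple_eta.
Qed.

Lemma group_ring_exprE a k g :
  (a ^+ k) g = \sum_(t : k.-tuple gT | word_prod t == g) word_weight a t.
Proof.
elim: k g => [|k IHk] g.
  rewrite expr0 group_ring1E ffunE inE big_mkcond (big_pred1 [tuple]) /=.
    by rewrite /word_prod /word_weight !big_nil eq_sym; case: eqP.
  by move=> t; apply/esym/eqP/tuple0.
rewrite exprS group_ring_mulE [RHS]big_mkcond sum_tupleS; apply: eq_bigr => x _.
rewrite IHk mulr_sumr [LHS]big_mkcond; apply: eq_bigr => t _.
rewrite /word_prod /word_weight !big_cons -[(_ == g)%g](inj_eq (mulgI x^-1)%g) mulKg.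
by case: ifP.
Qed.

Lemma word_prod_rot1 (s : seq gT) :
  exists h, word_prod (rot 1%N s) = (word_prod s ^ h)%g.
Proof.
case: s => [|x s]; first by exists 1%g; rewrite conjg1.
by exists x; rewrite rot1_cons /word_prod big_rcons big_cons conjgE -mulgA mulKg.
Qed.

Lemma word_weight_rot1 a (s : seq gT) :
  word_weight a (rot 1%N s) = word_weight a s.
Proof. by apply: perm_big; rewrite perm_rot. Qed.

Lemma word_prod_nseq k (x : gT) : word_prod (nseq k x) = (x ^+ k)%g.
Proof. by rewrite /word_prod big_nseq iter_mulg_1. Qed.

Lemma word_weight_nseq a k (x : gT) :
  word_weight a (nseq k x) = a x ^+ k.
Proof. by rewrite /word_weight big_nseq; elim: k => //= k ->; rewrite exprS. Qed.

End Words.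

Section CoprimeResidues.
Local Open Scope nat_scope.

Lemma coprime_inverse_mod m n : 0 < n -> coprime m n ->
  exists2 m', coprime m' n & m * m' = 1 %[mod n].
Proof.
move=> n_gt0 cmn; exists (m ^ (totient n).-1); first exact: coprimeXl.
by rewrite -expnS prednK ?totient_gt0 // Euler_exp_totient.
Qed.

Lemma coprime_large_prime_ind (P : nat -> Prop) n B : 0 < n ->
  (forall i j, i = j %[mod n] -> P i -> P j) -> P 1 ->
  (forall m q, prime q -> B < q -> P m -> P (m * q)) ->
  forall m, coprime m n -> P m.
Proof.
move=> n_gt0 Pmod P1 PMq m cmn.
suff P_large k : 0 < k -> (forall q, prime q -> q %| k -> B < q) -> P k.
  (* m + n t has no prime factor <= B *)
  pose t := \prod_(q < B.+1 | prime q && ~~ (q %| m)) q.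
  apply: (Pmod (m + n * t)); first by rewrite addnC mulnC modnMDl.
  apply: P_large => [|q q_pr].
    by rewrite addn_gt0 muln_gt0 n_gt0 prodn_cond_gt0 ?orbT // => q /andP[/prime_gt0].
  rewrite ltnNge; apply: contraL => le_q_B.
  have [q_m | q_m] := boolP (q %| m).
    rewrite dvdn_addr // Euclid_dvdM // negb_or -prime_coprime // (coprime_dvdl q_m cmn).
    rewrite Euclid_dvd_prod //.
    elim/big_ind: _ => // [x y /negbTE-> /negbTE-> // | i /andP[i_pr i_m]].
    by rewrite dvdn_prime2 //; apply: contra i_m => /eqP <-.
  have q_t : q %| t.
    by rewrite /t (bigD1 (Ordinal (le_q_B : q < B.+1))) /= ?q_pr ?q_m ?dvdn_mulr.
  by rewrite dvdn_addl ?q_m // dvdn_mull.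
elim/ltn_ind: k => k IHk k_gt0 k_large.
have [le_k_1 | gt_k_1] := leqP k 1; first by have -> : k = 1 by apply/anti_leq/andP.
have q_pr := pdiv_prime gt_k_1; have q_k := pdiv_dvd k.
rewrite -(divnK q_k); apply: PMq => //; first exact: k_large.
apply: IHk => [|| r r_pr r_k]; first by rewrite ltn_Pdiv // prime_gt1.
  by rewrite divn_gt0 ?pdiv_leq // prime_gt0.
by apply: k_large; rewrite // (dvdn_trans r_k) ?dvdn_div.
Qed.

End CoprimeResidues.

Section GroupPowers.
Variable gT : finGroupType.
Local Notation n := #|[set: gT]|.

Lemma card_setT_gt0 : (0 < n)%N.
Proof. exact: cardG_gt0. Qed.

Lemma expg_mod_card (x : gT) i j : i = j %[mod n] -> (x ^+ i = x ^+ j)%g.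
Proof.
move=> eq_ij; apply/eqP; rewrite eq_expg_mod_order.
have dvd_x_n : (#[x]%g %| n)%N := order_dvdG (in_setT x).
by rewrite -(modn_dvdm i dvd_x_n) -(modn_dvdm j dvd_x_n) eq_ij.
Qed.

Lemma expg_inverse_modK m m' : (m * m' = 1 %[mod n])%N ->
  cancel (fun x : gT => x ^+ m)%g (fun x => x ^+ m')%g.
Proof. by move=> mm'1 x; rewrite -expgM (expg_mod_card _ mm'1) expg1. Qed.

Lemma expg_coprime_inj k : coprime k n -> injective (fun x : gT => x ^+ k)%g.
Proof.
case/(coprime_inverse_mod card_setT_gt0) => k' _ kk'1.
exact: can_inj (expg_inverse_modK kk'1).
Qed.

Lemma expg_coprime_surj k (g : gT) : coprime k n -> exists x, g = (x ^+ k)%g.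
Proof.
case/(coprime_inverse_mod card_setT_gt0) => k' _ kk'1.
by exists (g ^+ k')%g; rewrite -expgM mulnC expgM expg_inverse_modK.
Qed.

End GroupPowers.

Section ClassFunctions.
Variable gT : finGroupType.
Implicit Types a b : group_ring gT.

Definition class_fun a := forall x h : gT, a (x ^ h)%g = a x.

Lemma class_fun1 : class_fun 1.
Proof. by move=> x h; rewrite !ffunE !inE conjg_eq1. Qed.

Lemma class_funM a b : class_fun a -> class_fun b -> class_fun (a * b).
Proof.
move=> ca cb x h; rewrite !group_ring_mulE (reindex_inj (@conjg_inj _ h)).
by apply: eq_bigr => z _; rewrite ca -conjVg -conjMg cb.
Qed.

Lemma class_funX a k : class_fun a -> class_fun (a ^+ k).
Proof.
move=> ca; elim: k => [|k IHk]; first exact: class_fun1.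
by rewrite exprS; apply: class_funM.
Qed.

End ClassFunctions.

Section FrobeniusCongruence.
Variables (gT : finGroupType) (p : nat).
Hypothesis p_pr : prime p.
Implicit Type a : group_ring gT.

Lemma Fp_fermat (u : 'F_p) : u ^+ p = u.
Proof. by have := expf_card u; rewrite card_Fp. Qed.

Lemma sum_expr_prime_Fp a (C : {set gT}) :
  (forall u h, ((u ^ h)%g \in C) = (u \in C)) ->
  \sum_(u in C) ((a ^+ p) u)%:~R = \sum_(x | (x ^+ p)%g \in C) (a x)%:~R :> 'F_p.
Proof.
move=> conjC; pose W := [set t : p.-tuple gT | word_prod t \in C].
have -> : \sum_(u in C) ((a ^+ p) u)%:~R = \sum_(t in W) (word_weight a t)%:~R :> 'F_p.
  rewrite [RHS](partition_big (fun t : p.-tuple gT => word_prod t) (mem C)) => [|t].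
    apply: eq_bigr => u uC; rewrite group_ring_exprE rmorph_sum; apply: eq_bigl => t.
    by rewrite inE; case: eqP => [->|]; rewrite ?uC ?andbF.
  by rewrite inE.
(* Rotation conjugates the product of a tuple and fixes only constant tuples. *)
rewrite (sum_fixed_Fp p_pr (rot_perm_order gT p)) => [|t|t]; first last.
- by rewrite rot_permE /= word_weight_rot1.
- by rewrite !inE rot_permE /=; have [h ->] := word_prod_rot1 t; rewrite conjC.
have p_gt0 : (0 < p)%N := prime_gt0 p_pr.
pose cst (x : gT) := [tuple of nseq p x].
rewrite (reindex_onto cst (fun t => nth 1%g t 0)) /= => [|t /andP[_]]; last first.
  rewrite rot_permE => /eqP/(congr1 val)/(rot1_fixed_nseq 1%g) /= eq_t.
  by apply: val_inj; rewrite [RHS]eq_t size_tuple.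
apply: eq_big => [x|x _]; last by rewrite word_weight_nseq rmorphXn Fp_fermat.
have rot_cst : rot1_tuple (cst x) = cst x.
  by apply: val_inj; rewrite /= /rot drop_nseq take_nseq // -nseqD subnK.
by rewrite inE rot_permE rot_cst eqxx word_prod_nseq nth_nseq p_gt0 eqxx !andbT.
Qed.

Lemma class_fun_expr_prime a y : coprime p #|[set: gT]| -> class_fun a ->
  ((a ^+ p) (y ^+ p)%g)%:~R = (a y)%:~R :> 'F_p.
Proof.
move=> cp ca; pose C := ((y ^+ p) ^: [set: gT])%g.
have conjC u h : ((u ^ h)%g \in C) = (u \in C).
  apply/imsetP/imsetP => [[h1 _ E] | [h1 _ ->]].
    by exists (h1 * h^-1)%g; rewrite ?inE // conjgM -E conjgK.
  by exists (h1 * h)%g; rewrite ?inE ?conjgM.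
have cpC : coprime p #|C|.
  rewrite -(index_cent1 [group of [set: gT]]).
  exact: coprime_dvdr (dvdn_indexg _ _) cp.
have sum_class_expr : \sum_(u in C) ((a ^+ p) u)%:~R =
    #|C|%:R * ((a ^+ p) (y ^+ p)%g)%:~R :> 'F_p.
  rewrite mulr_natl -sumr_const; apply: eq_bigr => _ /imsetP[h _ ->].
  by rewrite class_funX.
have sum_class : \sum_(x | (x ^+ p)%g \in C) (a x)%:~R = #|C|%:R * (a y)%:~R :> 'F_p.
  have pinj := expg_coprime_inj cp.
  rewrite mulr_natl -(card_preimset _ pinj) -sumr_const.
  apply: eq_big => [x|x]; first by rewrite inE.
  case/imsetP => h _ eq_x; have -> : x = (y ^ h)%g by apply: pinj; rewrite /= eq_x conjXg.
  by rewrite ca.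
have unit_C : (#|C|%:R : 'F_p) \is a GRing.unit by rewrite unitFpE.
by apply: (mulrI unit_C); rewrite -sum_class_expr (sum_expr_prime_Fp a conjC).
Qed.

End FrobeniusCongruence.

Section SetPowers.
Variable gT : finGroupType.
Local Notation n := #|[set: gT]|.
Implicit Types W X : {set gT}.

Lemma set_pow1 X : set_pow X 1 = X.
Proof.
apply/setP => u; apply/imsetP/idP => [[x xX ->] | uX]; first by rewrite expg1.
by exists u; rewrite ?expg1.
Qed.

Lemma set_powM W i j : set_pow (set_pow W i) j = set_pow W (i * j)%N.
Proof.
apply/setP => u; apply/imsetP/imsetP => [[_ /imsetP[x xW ->] ->] | [x xW ->]].
  by exists x; rewrite ?expgM.
by exists (x ^+ i)%g; [apply: imset_f | rewrite expgM].
Qed.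

Lemma set_pow_mod W i j : i = j %[mod n] -> set_pow W i = set_pow W j.
Proof.
move=> eq_ij; apply/setP => u.
by apply/imsetP/imsetP => [] [x xW ->]; exists x; rewrite ?(expg_mod_card _ eq_ij).
Qed.

Lemma mem_set_pow W k x : coprime k n -> ((x ^+ k)%g \in set_pow W k) = (x \in W).
Proof.
move=> ckn; apply/imsetP/idP => [[y yW /(expg_coprime_inj ckn) ->] // | xW].
by exists x.
Qed.

Lemma set_pow_set1 k : set_pow [set 1 : gT]%g k = [set 1%g].
Proof.
apply/setP => u; apply/imsetP/set1P => [[_ /set1P-> ->] | ->]; first exact: expg1n.
by exists 1%g; rewrite ?set11 ?expg1n.
Qed.

Lemma set_pow_inv X k : set_pow (set_inv X) k = set_inv (set_pow X k).
Proof.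
apply/setP => u; apply/imsetP/imsetP => [[_ /imsetP[x xX ->] ->] | [_ /imsetP[x xX ->] ->]].
  by exists (x ^+ k)%g; [apply: imset_f | rewrite expVgn].
by exists x^-1%g; [apply: imset_f | rewrite expVgn].
Qed.

Lemma sum_ul_set_pow_expg (S : {set {set gT}}) (c : {set gT} -> int) k x :
  coprime k n ->
  (\sum_(X in S) ul (set_pow X k) *~ c X : grpring gT) (x ^+ k)%g =
  (\sum_(X in S) ul X *~ c X : grpring gT) x.
Proof.
move=> ckn; rewrite !sum_ffunE; apply: eq_bigr => X _.
by rewrite !ffunMzE !ffunE mem_set_pow.
Qed.

End SetPowers.

Section PartitionSpan.
Variables (gT : finGroupType) (S : {set {set gT}}).
Hypothesis partS : partition S [set: gT].

Lemma pblock_setT_mem x : pblock S x \in S.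
Proof. by case/and3P: partS => /eqP coverS _ _; rewrite pblock_mem // coverS inE. Qed.

Lemma mem_pblock_setT x : x \in pblock S x.
Proof. by case/and3P: partS => /eqP coverS _ _; rewrite mem_pblock coverS inE. Qed.

Lemma def_pblock_setT X x : X \in S -> x \in X -> pblock S x = X.
Proof. by case/and3P: partS => _ trivS _; apply: def_pblock. Qed.

Lemma mem_block_setT X x : X \in S -> (x \in X) = (pblock S x == X).
Proof.
by move=> XS; apply/idP/eqP => [/(def_pblock_setT XS) // | <-]; apply: mem_pblock_setT.
Qed.

Lemma block_setT_neq0 X : X \in S -> X != set0.
Proof. by case/and3P: partS => _ _ S0 XS; apply: contraNneq S0 => <-. Qed.

Lemma span_coefE (c : {set gT} -> int) x :
  (\sum_(X in S) ul X *~ c X : grpring gT) x = c (pblock S x).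
Proof.
rewrite sum_ffunE (bigD1 (pblock S x)) ?pblock_setT_mem //= big1 ?addr0 => [|X /andP[XS nX]].
  by rewrite ffunMzE ffunE mem_pblock_setT mulrzz mul1r.
by rewrite ffunMzE ffunE (mem_block_setT _ XS) eq_sym (negbTE nX) mul0rz.
Qed.

Lemma in_spanP a :
  in_span S a <-> (forall x y, pblock S x = pblock S y -> a x = a y).
Proof.
split=> [[c ->] x y eq_xy | a_const]; first by rewrite !span_coefE eq_xy.
exists (fun X => a (repr X)); apply/ffunP => x; rewrite span_coefE; apply: a_const.
by rewrite (def_pblock_setT (pblock_setT_mem x) (mem_repr _ (mem_pblock_setT x))).
Qed.

Lemma in_span_ulP W :
  in_span S (ul W) <-> (forall x y, pblock S x = pblock S y -> (x \in W) = (y \in W)).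
Proof.
split=> [/in_spanP W_const x y /W_const | W_const]; last first.
  by apply/in_spanP => x y /W_const eq_xy; rewrite !ffunE eq_xy.
by rewrite !ffunE; case: (x \in W); case: (y \in W).
Qed.

Lemma in_span_ul_pblock_sub W x : in_span S (ul W) -> x \in W -> pblock S x \subset W.
Proof.
move/in_span_ulP=> W_const xW; apply/subsetP => y.
by rewrite (mem_block_setT _ (pblock_setT_mem x)) => /eqP/W_const ->.
Qed.

Lemma in_span_ul X : X \in S -> in_span S (ul X).
Proof. by move=> XS; apply/in_span_ulP => x y; rewrite !(mem_block_setT _ XS) => ->. Qed.

End PartitionSpan.

Section CentralClassFunction.
Variable gT : finGroupType.

Lemma gr_mul_ul1r (a : grpring gT) h z : gr_mul a (ul [set h]) z = a (z * h^-1)%g.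
Proof.
rewrite gr_mulE (bigD1 (z * h^-1)%g) //= big1 ?addr0 => [|y nyz].
  by rewrite ffunE invMg invgK -mulgA mulVg mulg1 set11 mulr1.
rewrite ffunE inE; case: eqP => [eq_h | _]; last by rewrite mulr0.
by rewrite -eq_h invMg invgK mulKVg eqxx in nyz.
Qed.

Lemma gr_mul_ul1l (a : grpring gT) h z : gr_mul (ul [set h]) a z = a (h^-1 * z)%g.
Proof.
rewrite gr_mulE (bigD1 h) //= big1 ?addr0 => [|y nyh]; first by rewrite ffunE set11 mul1r.
by rewrite ffunE inE (negbTE nyh) mul0r.
Qed.

Lemma central_class_fun (S : {set {set gT}}) (a : group_ring gT) :
  is_central S -> in_span S a -> class_fun a.
Proof.
move=> centS Sa x h.
have /(congr1 (fun b : grpring gT => b (x * h)%g)) := centS a Sa (ul [set h]).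
by rewrite gr_mul_ul1r gr_mul_ul1l mulgK conjgE mulgA.
Qed.

End CentralClassFunction.

Section SchurMultiplier.
Variables (gT : finGroupType) (S : {set {set gT}}).
Hypotheses (SringS : is_Sring S) (centS : is_central S).
Local Notation n := #|[set: gT]|.

Lemma Sring_partition : partition S [set: gT].
Proof. by case: SringS. Qed.
Let partS := Sring_partition.

Lemma in_span1 : in_span S (1 : group_ring gT).
Proof. by rewrite group_ring1E; apply: (in_span_ul partS); case: SringS. Qed.

Lemma in_spanM (a b : group_ring gT) : in_span S a -> in_span S b -> in_span S (a * b).
Proof. by case: SringS => _ _ _; apply. Qed.

Lemma in_spanX (a : group_ring gT) k : in_span S a -> in_span S (a ^+ k).
Proof.
move=> Sa; elim: k => [|k IHk]; first exact: in_span1.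
by rewrite exprS; apply: in_spanM.
Qed.

Lemma in_span_ul_set_pow_block p X : prime p -> coprime p n -> X \in S ->
  in_span S (ul (set_pow X p)).
Proof.
move=> p_pr cpn XS; apply/(in_span_ulP partS) => x y.
have [x' ->] := expg_coprime_surj x cpn; have [y' ->] := expg_coprime_surj y cpn.
move=> eq_xy; rewrite !mem_set_pow //.
(* (ul X)^p is constant on blocks and takes the value [x' \in X] mod p at x'^p. *)
have /(in_spanP partS) ulXp_const := in_spanX p (in_span_ul partS XS).
have := congr1 (fun z : int => z%:~R : 'F_p) (ulXp_const _ _ eq_xy).
have ulX_class := central_class_fun centS (in_span_ul partS XS).
rewrite /= !(class_fun_expr_prime p_pr _ cpn ulX_class) !ffunE.
by case: (x' \in X); case: (y' \in X) => //= /eqP; rewrite ?oner_eq0 // eq_sym oner_eq0.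
Qed.

Lemma in_span_ul_set_pow_prime p W : prime p -> coprime p n ->
  in_span S (ul W) -> in_span S (ul (set_pow W p)).
Proof.
move=> p_pr cpn SW; apply/(in_span_ulP partS).
suff Wp_closed x y : pblock S x = pblock S y -> x \in set_pow W p -> y \in set_pow W p.
  by move=> x y eq_xy; apply/idP/idP; apply: Wp_closed.
move=> eq_xy /imsetP[w wW x_def]; rewrite {x}x_def in eq_xy.
have /(in_span_ulP partS) Bwp_const :=
  in_span_ul_set_pow_block p_pr cpn (pblock_setT_mem partS w).
have : y \in set_pow (pblock S w) p.
  by rewrite -(Bwp_const _ _ eq_xy); apply: imset_f; apply: mem_pblock_setT.
case/imsetP => v vB ->; apply: imset_f.
exact: subsetP (in_span_ul_pblock_sub partS SW wW) v vB.
Qed.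

Lemma in_span_ul_set_pow m W : coprime m n ->
  in_span S (ul W) -> in_span S (ul (set_pow W m)).
Proof.
move=> cmn; move: m cmn W.
pose P m := forall W, in_span S (ul W) -> in_span S (ul (set_pow W m)).
apply: (@coprime_large_prime_ind P n n (card_setT_gt0 gT)).
- by move=> i j eq_ij PI W /PI; rewrite (set_pow_mod _ eq_ij).
- by move=> W; rewrite set_pow1.
move=> m q q_pr n_lt_q Pm W /Pm; rewrite -set_powM; apply: in_span_ul_set_pow_prime => //.
by rewrite prime_coprime // gtnNdvd ?card_setT_gt0.
Qed.

Theorem set_pow_Sring m X : coprime m n -> X \in S -> set_pow X m \in S.
Proof.
move=> cmn XS; have /set0Pn[x0 x0X] := block_setT_neq0 partS XS.
have [m' cm'n mm'1] := coprime_inverse_mod (card_setT_gt0 gT) cmn.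
set Y := pblock S (x0 ^+ m)%g.
have YXm : Y \subset set_pow X m.
  apply: (in_span_ul_pblock_sub partS (in_span_ul_set_pow cmn (in_span_ul partS XS))).
  by apply/imsetP; exists x0.
have XYm' : X \subset set_pow Y m'.
  rewrite -(def_pblock_setT partS XS x0X); apply: (in_span_ul_pblock_sub partS).
    exact: in_span_ul_set_pow cm'n (in_span_ul partS (pblock_setT_mem partS _)).
  apply/imsetP; exists (x0 ^+ m)%g; last by rewrite expg_inverse_modK.
  exact: mem_pblock_setT.
suff -> : set_pow X m = Y by apply: pblock_setT_mem.
have : set_pow X m \subset set_pow (set_pow Y m') m by apply: imsetS.
have m'm1 : (m' * m = 1 %[mod n])%N by rewrite mulnC.
rewrite set_powM (set_pow_mod _ m'm1) set_pow1 => XmY.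
by apply/eqP; rewrite eqEsubset YXm XmY.
Qed.

End SchurMultiplier.

Section Trace.
Variable gT : finGroupType.
Local Notation n := #|[set: gT]|.
Implicit Type X : {set gT}.

Lemma mem_traceP X x :
  reflect (exists2 m, coprime m n & x \in set_pow X m) (x \in trace X).
Proof.
apply: (iffP bigcupP) => [[i ci xi] | [m cm xm]]; first by exists i.
exists (Ordinal (ltn_pmod m (card_setT_gt0 gT))); first by rewrite /= coprime_modl.
by rewrite /= (@set_pow_mod _ _ (m %% n) m) // modn_mod.
Qed.

Lemma trace_sub X : X \subset trace X.
Proof.
by apply/subsetP => x xX; apply/mem_traceP; exists 1%N; rewrite ?coprime1n ?set_pow1.
Qed.

Lemma trace_set_pow X m : coprime m n -> trace (set_pow X m) = trace X.
Proof.
move=> cmn; have [m' cm'n mm'1] := coprime_inverse_mod (card_setT_gt0 gT) cmn.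
apply/setP => z; apply/mem_traceP/mem_traceP => [[j cj] | [j cj]].
  by rewrite set_powM; exists (m * j)%N; rewrite // coprimeMl cmn.
exists (m' * j)%N; first by rewrite coprimeMl cm'n.
have mm'j : (m * (m' * j) = j %[mod n])%N by rewrite mulnA -modnMml mm'1 modnMml mul1n.
by rewrite set_powM (set_pow_mod _ mm'j).
Qed.

Lemma trace_set1 : trace [set 1 : gT]%g = [set 1%g].
Proof.
apply/setP => u; apply/mem_traceP/idP => [[m _] | u1]; first by rewrite set_pow_set1.
by exists 1%N; rewrite ?coprime1n ?set_pow1.
Qed.

Lemma trace_set_inv X : trace (set_inv X) = set_inv (trace X).
Proof.
apply/setP => u; apply/mem_traceP/imsetP => [[m cmn] | [v /mem_traceP[m cmn vXm] ->]].
  rewrite set_pow_inv => /imsetP[v vXm ->].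
  by exists v => //; apply/mem_traceP; exists m.
by exists m; rewrite // set_pow_inv; apply/imsetP; exists v.
Qed.

Definition pow_invariant (a : group_ring gT) :=
  forall x m, coprime m n -> a (x ^+ m)%g = a x.

Lemma pow_invariant_sum_set_powP (S : {set {set gT}}) (a : group_ring gT) :
  in_span S a ->
  pow_invariant a <->
  (forall m, coprime m n -> forall c : {set gT} -> int,
     a = \sum_(X in S) ul X *~ c X -> \sum_(X in S) ul (set_pow X m) *~ c X = a).
Proof.
case=> c0 a_def; split=> [a_inv m cmn c a_c | a_fix x m cmn].
  apply/ffunP => g; have [x ->] := expg_coprime_surj g cmn.
  by rewrite sum_ul_set_pow_expg // -a_c a_inv.
by rewrite -{1}(a_fix m cmn c0 a_def) sum_ul_set_pow_expg // -a_def.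
Qed.

End Trace.

Section TraceSring.
Variables (gT : finGroupType) (S : {set {set gT}}).
Hypotheses (SringS : is_Sring S) (centS : is_central S).
Let partS := Sring_partition SringS.
Local Notation T := (trace_sets S).

Lemma trace_pblock X z : X \in S -> z \in trace X -> trace (pblock S z) = trace X.
Proof.
move=> XS /mem_traceP[m cmn zXm].
by rewrite (def_pblock_setT partS (set_pow_Sring SringS centS cmn XS) zXm) trace_set_pow.
Qed.

Lemma partition_trace_sets : partition T [set: gT].
Proof.
apply/and3P; split.
- rewrite eqEsubset subsetT /=; apply/subsetP => x _; apply/bigcupP.
  exists (trace (pblock S x)); first by apply: imset_f; apply: pblock_setT_mem.
  exact: subsetP (trace_sub _) x (mem_pblock_setT partS x).
- apply/trivIsetP => _ _ /imsetP[X XS ->] /imsetP[Y YS ->] neq_XY.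
  rewrite -setI_eq0; apply/eqP/setP => z; rewrite !inE; apply/negbTE/andP => -[zX zY].
  by move: neq_XY; rewrite -(trace_pblock XS zX) -(trace_pblock YS zY) eqxx.
- apply/imsetP => -[X XS tr0]; have /set0Pn[x xX] := block_setT_neq0 partS XS.
  by have := subsetP (trace_sub X) x xX; rewrite -tr0 inE.
Qed.

Lemma pblock_trace_sets x : pblock T x = trace (pblock S x).
Proof.
apply: (def_pblock_setT partition_trace_sets); first by apply: imset_f; apply: pblock_setT_mem.
exact: subsetP (trace_sub _) x (mem_pblock_setT partS x).
Qed.

Lemma in_span_trace_setsP (a : group_ring gT) :
  in_span T a <-> in_span S a /\ pow_invariant a.
Proof.
split=> [/(in_spanP partition_trace_sets) a_const | [/(in_spanP partS) a_const a_inv]].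
  split=> [|x m cmn].
    by apply/(in_spanP partS) => x y eq_xy; apply: a_const; rewrite !pblock_trace_sets eq_xy.
  apply: a_const; rewrite !pblock_trace_sets (trace_pblock (pblock_setT_mem partS x)) //.
  by apply/mem_traceP; exists m => //; apply/imsetP; exists x; rewrite ?mem_pblock_setT.
apply/(in_spanP partition_trace_sets) => x y; rewrite !pblock_trace_sets => eq_xy.
have : y \in trace (pblock S x).
  by rewrite eq_xy; apply: (subsetP (trace_sub _)); apply: mem_pblock_setT.
case/mem_traceP => m cmn /imsetP[x1 x1B ->].
by rewrite a_inv // (a_const x1 x) // (def_pblock_setT partS (pblock_setT_mem partS x) x1B).
Qed.

End TraceSring.

Lemma intr_Fp_inj q (u v : int) : prime q -> `|u - v| < q%:Z ->
  (u%:~R : 'F_q) = v%:~R -> u = v.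
Proof.
move=> q_pr lt_uv_q /eqP; rewrite -subr_eq0 -intrB -(dvdz_pcharf (pchar_Fp q_pr)).
rewrite /dvdz /=; have [/eqP | uv_gt0 /(dvdn_leq uv_gt0)] := posnP `|u - v|.
  by rewrite absz_eq0 subr_eq0 => /eqP.
by rewrite -lez_nat abszE leNgt lt_uv_q.
Qed.

Section GroupRingBounds.
Variable gT : finGroupType.
Implicit Types a b : group_ring gT.

Lemma group_ring_mul_Fp q a b a' b' :
  (forall u, (a u)%:~R = (a' u)%:~R :> 'F_q) ->
  (forall u, (b u)%:~R = (b' u)%:~R :> 'F_q) ->
  forall u, ((a * b) u)%:~R = ((a' * b') u)%:~R :> 'F_q.
Proof.
move=> aa' bb' u; rewrite !group_ring_mulE !rmorph_sum; apply: eq_bigr => x _.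
by rewrite !rmorphM /= aa' bb'.
Qed.

Lemma group_ring_mul_norm_le a b u :
  `|(a * b) u| <= \sum_x `|a x| * \sum_y `|b y|.
Proof.
rewrite group_ring_mulE; apply: le_trans (ler_norm_sum _ _ _) _; apply: ler_sum => x _.
rewrite normrM; apply: ler_wpM2l => //.
by rewrite (bigD1 (x^-1 * u)%g) //= lerDl sumr_ge0.
Qed.

End GroupRingBounds.

Section PowInvariantMul.
Variables (gT : finGroupType) (S : {set {set gT}}).
Hypotheses (SringS : is_Sring S) (centS : is_central S).
Local Notation n := #|[set: gT]|.
Implicit Types a b : group_ring gT.

Lemma pow_invariant_expr_prime_Fp q a u : prime q -> coprime q n ->
  in_span S a -> pow_invariant a -> ((a ^+ q) u)%:~R = (a u)%:~R :> 'F_q.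
Proof.
move=> q_pr cqn Sa a_inv; have [v ->] := expg_coprime_surj u cqn.
by rewrite (class_fun_expr_prime q_pr v cqn (central_class_fun centS Sa)) a_inv.
Qed.

Lemma pow_invariantM_Fp q a b y : prime q -> coprime q n ->
  in_span S a -> pow_invariant a -> in_span S b -> pow_invariant b ->
  ((a * b) (y ^+ q)%g)%:~R = ((a * b) y)%:~R :> 'F_q.
Proof.
move=> q_pr cqn Sa a_inv Sb b_inv.
have ab_class := central_class_fun centS (in_spanM SringS Sa Sb).
rewrite -(class_fun_expr_prime q_pr y cqn ab_class) exprMn_comm; last exact: centS.
by apply: group_ring_mul_Fp => u; rewrite pow_invariant_expr_prime_Fp.
Qed.

Lemma pow_invariantM a b : in_span S a -> pow_invariant a ->
  in_span S b -> pow_invariant b -> pow_invariant (a * b).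
Proof.
move=> Sa a_inv Sb b_inv x m cmn; move: m cmn x.
pose K := \sum_x `|a x| * \sum_y `|b y|.
have K_ge0 : 0 <= K by apply: sumr_ge0 => x _; rewrite mulr_ge0 ?sumr_ge0.
have ab_bound u v : `|(a * b) u - (a * b) v| <= K + K.
  by rewrite (le_trans (ler_normB _ _)) // lerD ?group_ring_mul_norm_le.
pose P m := forall x, (a * b) (x ^+ m)%g = (a * b) x.
apply: (@coprime_large_prime_ind P n (n + 2 * `|K|)%N (card_setT_gt0 gT)).
- by move=> i j eq_ij Pi x; rewrite -(expg_mod_card _ eq_ij) Pi.
- by move=> x; rewrite expg1.
move=> m q q_pr lt_B_q Pm x.
have cqn : coprime q n.
  by rewrite prime_coprime // gtnNdvd ?card_setT_gt0 // (leq_ltn_trans (leq_addr _ _) lt_B_q).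
have congr_q := pow_invariantM_Fp (x ^+ m)%g q_pr cqn Sa a_inv Sb b_inv.
rewrite expgM -[RHS](Pm x); apply: intr_Fp_inj q_pr (le_lt_trans (ab_bound _ _) _) congr_q.
have -> : K = `|K|%N by rewrite abszE ger0_norm.
rewrite -PoszD ltz_nat; apply: leq_ltn_trans lt_B_q.
by rewrite addnn -mul2n leq_addl.
Qed.

End PowInvariantMul.

Theorem mainTheorem7 (gT : finGroupType) (S : {set {set gT}}) :
  is_Sring S -> is_central S ->
  [/\ partition (trace_sets S) [set: gT],
      is_Sring (trace_sets S) /\ is_central (trace_sets S),
      (forall a, in_span (trace_sets S) a -> in_span S a) &
      (forall a : grpring gT,
         in_span (trace_sets S) a <->
         (in_span S a /\
          forall (m : nat), coprime m #|[set: gT]| ->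
          forall c : {set gT} -> int,
            a = \sum_(X in S) ul X *~ c X ->
            \sum_(X in S) ul (set_pow X m) *~ c X = a))].
Proof.
move=> SringS centS.
have spanT := in_span_trace_setsP SringS centS.
have T_sub_S a : in_span (trace_sets S) a -> in_span S a by case/spanT.
split=> //; first exact: partition_trace_sets.
- split; last by move=> a /T_sub_S; apply: centS.
  split; first exact: partition_trace_sets.
  + by rewrite -trace_set1; apply: imset_f; case: SringS.
  + move=> _ /imsetP[X XS ->]; rewrite -trace_set_inv; apply: imset_f.
    by case: SringS => _ _ + _; apply.
  + move=> a b /spanT[Sa a_inv] /spanT[Sb b_inv]; apply/spanT.
    split; first exact: (in_spanM SringS Sa Sb).
    exact: (pow_invariantM SringS centS Sa a_inv Sb b_inv).
move=> a; split=> [/spanT[Sa /(pow_invariant_sum_set_powP Sa)] | [Sa]] //.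
by move/(pow_invariant_sum_set_powP Sa) => a_inv; apply/spanT.
Qed.
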